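(* For each $p>0$, there exists a $\Sigma^0_p$ equivalence relation $E$ on $\omega$ which is complete under finitary reducibility among $\Sigma^0_p$ equivalence relations (every $\Sigma^0_p$ equivalence relation $F$ satisfies $F\leq_c^{<\omega}E$), but is not complete under computable reducibility among them (some $\Sigma^0_p$ equivalence relation $F$ has $F\not\leq_cE$).
   Context: For equivalence relations $E,F$ on $\omega$, $F\leq_cE$ means there is a total computable $g$ with $x\,F\,y\iff g(x)\,E\,g(y)$ for all $x,y$. $F\leq_c^{<\omega}E$ means there is one total computable function which, given $n\ge1$ and an $n$-tuple $(x_0,\dots,x_{n-1})$, outputs an $n$-tuple $(y_0,\dots,y_{n-1})$ with $x_i\,F\,x_j\iff y_i\,E\,y_j$ for all $i<j<n$. A $\Sigma^0_p$ equivalence relation is an equivalence relation on $\omega$ that is a $\Sigma^0_p$ subset of $\omega\times\omega$. *)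

From Stdlib Require Import List Arith.
Import ListNotations.

Inductive recf : Type :=
| RZero : recf
| RSucc : recf
| RProj : nat -> recf                (* i-th argument (0 if absent) *)
| RComp : recf -> list recf -> recf
| RPrim : recf -> recf -> recf       (* primitive recursion on first arg *)
| RMu   : recf -> recf.

Inductive eval : recf -> list nat -> nat -> Prop :=
| eZero xs : eval RZero xs 0
| eSucc x xs : eval RSucc (x :: xs) (S x)
| eProj i xs : eval (RProj i) xs (nth i xs 0)
| eComp f gs xs ys v : evals gs xs ys -> eval f ys v -> eval (RComp f gs) xs v
| ePrim0 f g xs v : eval f xs v -> eval (RPrim f g) (0 :: xs) v
| ePrimS f g n xs r v :
    eval (RPrim f g) (n :: xs) r -> eval g (n :: r :: xs) v ->
    eval (RPrim f g) (S n :: xs) v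
| eMu f xs y :
    eval f (y :: xs) 0 ->
    (forall z, z < y -> exists k, eval f (z :: xs) (S k)) ->
    eval (RMu f) xs y
with evals : list recf -> list nat -> list nat -> Prop :=
| esNil xs : evals [] xs []
| esCons g gs xs y ys : eval g xs y -> evals gs xs ys -> evals (g :: gs) xs (y :: ys).

Definition computable (g : nat -> nat) : Prop :=
  exists c : recf, forall x, eval c [x] (g x).

(* A set of naturals is computable (decidable): its characteristic
   function (0 = in, 1 = out) is computed by a total program. *)
Definition decidable_set (A : nat -> Prop) : Prop :=
  exists c : recf, forall x, (A x -> eval c [x] 0) /\ (~ A x -> eval c [x] 1).

Definition cpair (x y : nat) : nat := (x + y) * (x + y + 1) / 2 + y.

Fixpoint code_seq (s : list nat) : nat :=
  match s with
  | [] => 0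
  | x :: s' => S (cpair x (code_seq s'))
  end.

(* Arithmetical hierarchy for sets of naturals:
   Sigma^0_0 = computable; Sigma^0_{p+1} = exists y. Pi^0_p,
   where Pi^0_p sets are complements of Sigma^0_p sets. *)
Fixpoint Sigma0 (p : nat) (A : nat -> Prop) : Prop :=
  match p with
  | 0 => decidable_set A
  | S q => exists B : nat -> Prop, Sigma0 q B /\
             forall x, A x <-> exists y, ~ B (cpair x y)
  end.

Definition Sigma0_rel (p : nat) (E : nat -> nat -> Prop) : Prop :=
  Sigma0 p (fun n => exists x y, n = cpair x y /\ E x y).

Definition equivalence_rel (E : nat -> nat -> Prop) : Prop :=
  (forall x, E x x) /\ (forall x y, E x y -> E y x) /\
  (forall x y z, E x y -> E y z -> E x z).

Definition Sigma0_eqrel (p : nat) (E : nat -> nat -> Prop) : Prop :=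
  equivalence_rel E /\ Sigma0_rel p E.

Definition creducible (F E : nat -> nat -> Prop) : Prop :=
  exists g : nat -> nat, computable g /\
    forall x y, F x y <-> E (g x) (g y).

(* Finitary reducibility F <=_c^{<omega} E: one total computable function
   (acting on codes of finite tuples) sending each n-tuple (n >= 1) to an
   n-tuple that preserves and reflects the relation pairwise. *)
Definition fin_reducible (F E : nat -> nat -> Prop) : Prop :=
  exists f : list nat -> list nat,
    (exists c : recf, forall s, eval c [code_seq s] (code_seq (f s))) /\
    forall s, 1 <= length s ->
      length (f s) = length s /\
      forall i j, i < j < length s ->
        (F (nth i s 0) (nth j s 0) <-> E (nth i (f s) 0) (nth j (f s) 0)).

(* The equivalence relation lives on triples (e, c, i) with c the code of a finite tuple s and
   i a position in it: (e, c, i) and (e, c, j) are equivalent when i and j are joined by a walk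
   through positions whose entries are related, in either order, by the e-th relation R_e of a
   universal Sigma^0_p enumeration.  If F = R_e is an equivalence relation, the tuple s is sent to
   the triples (e, code s, i) for i < |s|, and on these the walk relation is exactly F, since F is
   transitive.  Every class is finite, however, so the relation that merges the diagonal set
   K = {x | R_x(x, x)} into one class cannot be computably reduced: a reduction g would decide K
   as the preimage of the finite class of g(x0) for some x0 in K.  The universal Sigma^0_p
   enumeration rests on a normal form theorem, certifying halting computations of programs by
   finite derivations whose validity is decidable. *)

From Stdlib Require Import List Arith Lia Bool Classical ClassicalEpsilon.
Import ListNotations.

(** * Cantor pairing and sequence codes *)

Fixpoint triangle (d : nat) : nat :=
  match d with 0 => 0 | S m => triangle m + S m end.

Lemma triangle_double d : 2 * triangle d = d * (d + 1).
Proof. induction d; simpl; nia. Qed.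

Lemma cpair_triangle x y : cpair x y = triangle (x + y) + y.
Proof.
  unfold cpair. f_equal. rewrite <- triangle_double, Nat.mul_comm.
  apply Nat.div_mul. lia.
Qed.

Lemma triangle_le_mono a b : a <= b -> triangle a <= triangle b.
Proof. induction 1; simpl; lia. Qed.

(* [cdiag n] is the index of the diagonal [x + y] on which the pair coded by [n] lies. *)
Fixpoint cdiag (n : nat) : nat :=
  match n with
  | 0 => 0
  | S m => let r := cdiag m in if triangle (S r) <=? S m then S r else r
  end.

Lemma cdiag_spec n : triangle (cdiag n) <= n < triangle (S (cdiag n)).
Proof.
  induction n; simpl; [lia|].
  destruct (Nat.leb_spec (triangle (cdiag n) + S (cdiag n)) (S n)); simpl in *; lia.
Qed.

Lemma cdiag_unique a n : triangle a <= n < triangle (S a) -> cdiag n = a.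
Proof.
  intros H. pose proof (cdiag_spec n).
  destruct (Nat.lt_trichotomy a (cdiag n)) as [h|[h|h]]; auto.
  - assert (triangle (S a) <= triangle (cdiag n)) by (apply triangle_le_mono; lia). lia.
  - assert (triangle (S (cdiag n)) <= triangle a) by (apply triangle_le_mono; lia). lia.
Qed.

Definition csnd (n : nat) : nat := n - triangle (cdiag n).
Definition cfst (n : nat) : nat := cdiag n - csnd n.

Lemma cdiag_cpair x y : cdiag (cpair x y) = x + y.
Proof. apply cdiag_unique. rewrite cpair_triangle. simpl. lia. Qed.

Lemma csnd_cpair x y : csnd (cpair x y) = y.
Proof. unfold csnd. rewrite cdiag_cpair, cpair_triangle. lia. Qed.

Lemma cfst_cpair x y : cfst (cpair x y) = x.
Proof. unfold cfst. rewrite csnd_cpair, cdiag_cpair. lia. Qed.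

Lemma cpair_cfst_csnd n : cpair (cfst n) (csnd n) = n.
Proof.
  pose proof (cdiag_spec n) as H. unfold cfst, csnd. rewrite cpair_triangle. simpl in H.
  replace (cdiag n - (n - triangle (cdiag n)) + (n - triangle (cdiag n))) with (cdiag n) by lia.
  lia.
Qed.

Lemma csnd_le n : csnd n <= n.
Proof. unfold csnd; lia. Qed.

Lemma cpair_ge_r x y : y <= cpair x y.
Proof. rewrite cpair_triangle; lia. Qed.

Definition code_hd (c : nat) : nat := cfst (pred c).
Definition code_tl (c : nat) : nat := csnd (pred c).
Definition code_drop (k c : nat) : nat := Nat.iter k code_tl c.
Definition code_nth (k c : nat) : nat := code_hd (code_drop k c).

Fixpoint code_len_upto (k c : nat) : nat :=
  match k with
  | 0 => 0
  | S m => if code_drop m c =? 0 then code_len_upto m c else S (code_len_upto m c)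
  end.

(* A sequence is never longer than its code, so counting the first [c] tails suffices. *)
Definition code_len (c : nat) : nat := code_len_upto c c.

Lemma code_hd_cons x s : code_hd (code_seq (x :: s)) = x.
Proof. apply cfst_cpair. Qed.

Lemma code_tl_cons x s : code_tl (code_seq (x :: s)) = code_seq s.
Proof. apply csnd_cpair. Qed.

Lemma code_drop_seq k s : code_drop k (code_seq s) = code_seq (skipn k s).
Proof.
  revert s; induction k; intros s; auto.
  unfold code_drop in *. rewrite Nat.iter_succ_r. destruct s as [|x s].
  - specialize (IHk []). rewrite skipn_nil in *. auto.
  - rewrite code_tl_cons. apply IHk.
Qed.

Lemma code_seq_eq0 s : code_seq s = 0 <-> s = [].
Proof. destruct s; simpl; split; congruence. Qed.

Lemma code_nth_seq k s : code_nth k (code_seq s) = nth k s 0.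
Proof.
  unfold code_nth. rewrite code_drop_seq.
  revert s; induction k; intros [|x s]; simpl; auto. apply code_hd_cons.
Qed.

Lemma length_le_code_seq s : length s <= code_seq s.
Proof. induction s as [|x s IH]; simpl; auto. pose proof (cpair_ge_r x (code_seq s)). lia. Qed.

Lemma code_drop_seq_neq0 k s : code_drop k (code_seq s) <> 0 <-> k < length s.
Proof.
  rewrite code_drop_seq, code_seq_eq0, <- length_zero_iff_nil, length_skipn. lia.
Qed.

Lemma code_len_upto_seq k s : code_len_upto k (code_seq s) = min k (length s).
Proof.
  induction k; [reflexivity|]. cbn [code_len_upto]. rewrite IHk.
  destruct (Nat.eqb_spec (code_drop k (code_seq s)) 0) as [h|h].
  - assert (~ k < length s) by (rewrite <- code_drop_seq_neq0; auto). lia.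
  - apply code_drop_seq_neq0 in h. lia.
Qed.

Lemma code_len_seq s : code_len (code_seq s) = length s.
Proof. unfold code_len. rewrite code_len_upto_seq. pose proof (length_le_code_seq s). lia. Qed.

Lemma code_seq_surj c : exists s, code_seq s = c.
Proof.
  induction c as [c IH] using lt_wf_ind. destruct c as [|c]; [exists []; auto|].
  destruct (IH (csnd c)) as [s Hs]; [pose proof (csnd_le c); lia|].
  exists (cfst c :: s). simpl. rewrite Hs, cpair_cfst_csnd. auto.
Qed.

(** * Computable functions on argument lists *)

Definition rec_fn (k : nat) (F : list nat -> nat) : Prop :=
  exists c, forall xs, length xs = k -> eval c xs (F xs).

(* Booleans are returned as [1] for [true], unlike [decidable_set] where [0] means membership. *)
Definition rec_pred (k : nat) (b : list nat -> bool) : Prop :=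
  rec_fn k (fun xs => if b xs then 1 else 0).

Lemma rec_fn_ext k F G :
  rec_fn k F -> (forall xs, length xs = k -> F xs = G xs) -> rec_fn k G.
Proof. intros [c Hc] H. exists c. intros xs Hx. rewrite <- H; auto. Qed.

Lemma rec_fn_nth k i : rec_fn k (fun xs => nth i xs 0).
Proof. exists (RProj i). intros; constructor. Qed.

Lemma rec_fn_succ k F : rec_fn k F -> rec_fn k (fun xs => S (F xs)).
Proof.
  intros [c Hc]. exists (RComp RSucc [c]). intros xs Hx.
  econstructor; repeat constructor. apply Hc; auto.
Qed.

Lemma rec_fn_const k n : rec_fn k (fun _ => n).
Proof.
  induction n as [|n IH]; [exists RZero; intros; constructor|].
  apply (rec_fn_succ k (fun _ => n)). exact IH.
Qed.

Lemma evals_proj_app l xs : evals (map RProj (seq (length l) (length xs))) (l ++ xs) xs.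
Proof.
  revert l; induction xs as [|x xs IH]; intros l; simpl; constructor.
  - replace x with (nth (length l) (l ++ x :: xs) 0) at 2 by
      (rewrite app_nth2, Nat.sub_diag; auto).
    constructor.
  - specialize (IH (l ++ [x])). rewrite <- app_assoc, length_app, Nat.add_1_r in IH. exact IH.
Qed.

Lemma rec_fn_comp k Fs G :
  Forall (rec_fn k) Fs -> rec_fn (length Fs) G ->
  rec_fn k (fun xs => G (map (fun F => F xs) Fs)).
Proof.
  intros HFs HG.
  assert (Hcs : exists cs, forall xs, length xs = k -> evals cs xs (map (fun F => F xs) Fs)).
  { clear HG. induction HFs as [|F Fs HF _ IH].
    - exists []. intros; constructor.
    - destruct HF as [c Hc], IH as [cs Hcs].
      exists (c :: cs). intros; constructor; auto. }
  destruct Hcs as [cs Hcs], HG as [cG HG]. exists (RComp cG cs). intros xs Hx.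
  econstructor; [apply Hcs; auto|]. apply HG. rewrite length_map; auto.
Qed.

Lemma rec_fn_comp1 h k F :
  rec_fn 1 (fun xs => h (nth 0 xs 0)) -> rec_fn k F -> rec_fn k (fun xs => h (F xs)).
Proof. intros H1 H2. apply (rec_fn_comp k [F] _ (Forall_cons _ H2 (Forall_nil _)) H1). Qed.

Lemma rec_fn_tl k F : rec_fn k F -> rec_fn (S k) (fun ys => F (tl ys)).
Proof.
  intros [c Hc]. exists (RComp c (map RProj (seq 1 k))).
  intros [|y ys] Hy; simpl in Hy; [lia|]. injection Hy as <-.
  econstructor; [apply (evals_proj_app [y] ys)|]. apply Hc; auto.
Qed.

Lemma rec_fn_drop_arg1 k F :
  rec_fn (S k) F -> rec_fn (S (S k)) (fun ys => F (nth 0 ys 0 :: tl (tl ys))).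
Proof.
  intros [c Hc]. exists (RComp c (RProj 0 :: map RProj (seq 2 k))).
  intros [|y [|z ys]] Hy; simpl in Hy; try lia. injection Hy as <-.
  econstructor; [repeat constructor; apply (evals_proj_app [y; z] ys)|].
  apply Hc; simpl; lia.
Qed.

Lemma nth_tl_S i (ys : list nat) : nth i (tl ys) 0 = nth (S i) ys 0.
Proof. destruct ys; auto. destruct i; auto. Qed.

Lemma rec_fn_nth_tl k i F :
  rec_fn k (fun ys => nth (S i) (F ys) 0) -> rec_fn k (fun ys => nth i (tl (F ys)) 0).
Proof. intros H. eapply rec_fn_ext; [exact H|]. intros. symmetry. apply nth_tl_S. Qed.

Lemma rec_fn_rect k z s n :
  rec_fn k z -> rec_fn (S (S k)) (fun ys => s (nth 0 ys 0) (nth 1 ys 0) (tl (tl ys))) ->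
  rec_fn k n ->
  rec_fn k (fun xs => nat_rect (fun _ => nat) (z xs) (fun m r => s m r xs) (n xs)).
Proof.
  intros [cz Hz] [cs Hs] [cn Hn].
  exists (RComp (RPrim cz cs) (cn :: map RProj (seq 0 k))). intros xs Hx.
  econstructor.
  { constructor; [apply Hn; auto|]. subst k. apply (evals_proj_app [] xs). }
  generalize (n xs). intros m. induction m; simpl.
  - constructor. auto.
  - econstructor; [apply IHm|]. apply (Hs (m :: _ :: xs)). simpl; auto.
Qed.

Lemma rec_fn_add k F G : rec_fn k F -> rec_fn k G -> rec_fn k (fun xs => F xs + G xs).
Proof.
  intros. eapply rec_fn_ext.
  - apply (rec_fn_rect k G (fun _ r _ => S r) F); auto. apply rec_fn_succ, rec_fn_nth.
  - intros xs _. simpl. induction (F xs); simpl; auto.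
Qed.

Lemma rec_fn_pred k F : rec_fn k F -> rec_fn k (fun xs => pred (F xs)).
Proof.
  intros. eapply rec_fn_ext.
  - apply (rec_fn_rect k (fun _ => 0) (fun m _ _ => m) F); auto using rec_fn_const, rec_fn_nth.
  - intros xs _. simpl. destruct (F xs); auto.
Qed.

Lemma rec_fn_sub k F G : rec_fn k F -> rec_fn k G -> rec_fn k (fun xs => F xs - G xs).
Proof.
  intros. eapply rec_fn_ext.
  - apply (rec_fn_rect k F (fun _ r _ => pred r) G); auto. apply rec_fn_pred, rec_fn_nth.
  - intros xs _. simpl. induction (G xs) as [|m IH]; simpl; [lia|]. rewrite IH. lia.
Qed.

Lemma rec_fn_if k b F G :
  rec_pred k b -> rec_fn k F -> rec_fn k G -> rec_fn k (fun xs => if b xs then F xs else G xs).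
Proof.
  intros Hb HF HG. eapply rec_fn_ext.
  - apply (rec_fn_rect k G (fun _ _ xs => F xs) (fun xs => if b xs then 1 else 0)); auto.
    apply (rec_fn_tl (S k) (fun ys => F (tl ys))), rec_fn_tl, HF.
  - intros xs _. simpl. destruct (b xs); auto.
Qed.

Lemma rec_pred_const k b : rec_pred k (fun _ => b).
Proof. exact (rec_fn_const k (if b then 1 else 0)). Qed.

Lemma rec_pred_eqb0 k F : rec_fn k F -> rec_pred k (fun xs => F xs =? 0).
Proof.
  intros. eapply rec_fn_ext.
  - apply (rec_fn_rect k (fun _ => 1) (fun _ _ _ => 0) F); auto using rec_fn_const.
  - intros xs _. simpl. destruct (F xs); auto.
Qed.

Lemma rec_pred_eqb k F G : rec_fn k F -> rec_fn k G -> rec_pred k (fun xs => F xs =? G xs).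
Proof.
  intros. eapply rec_fn_ext.
  - apply (rec_pred_eqb0 k (fun xs => (F xs - G xs) + (G xs - F xs))).
    apply rec_fn_add; apply rec_fn_sub; auto.
  - intros xs _. simpl. destruct (Nat.eqb_spec (F xs) (G xs));
      destruct (Nat.eqb_spec (F xs - G xs + (G xs - F xs)) 0); auto; lia.
Qed.

Lemma rec_pred_leb k F G : rec_fn k F -> rec_fn k G -> rec_pred k (fun xs => F xs <=? G xs).
Proof.
  intros. eapply rec_fn_ext.
  - apply (rec_pred_eqb0 k (fun xs => F xs - G xs)). apply rec_fn_sub; auto.
  - intros xs _. simpl. destruct (Nat.leb_spec (F xs) (G xs));
      destruct (Nat.eqb_spec (F xs - G xs) 0); auto; lia.
Qed.

Lemma rec_pred_ltb k F G : rec_fn k F -> rec_fn k G -> rec_pred k (fun xs => F xs <? G xs).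
Proof. intros. apply (rec_pred_leb k (fun xs => S (F xs))); auto. apply rec_fn_succ; auto. Qed.

Lemma rec_pred_if k a b c :
  rec_pred k a -> rec_pred k b -> rec_pred k c ->
  rec_pred k (fun xs => if a xs then b xs else c xs).
Proof.
  intros. eapply rec_fn_ext.
  - apply (rec_fn_if k a (fun xs => if b xs then 1 else 0) (fun xs => if c xs then 1 else 0)); auto.
  - intros xs _. simpl. destruct (a xs); auto.
Qed.

Lemma rec_pred_andb k a b : rec_pred k a -> rec_pred k b -> rec_pred k (fun xs => a xs && b xs).
Proof.
  intros. eapply rec_fn_ext;
    [apply (rec_pred_if k a b (fun _ => false)); auto; apply rec_pred_const|].
  intros xs _. simpl. destruct (a xs); auto.
Qed.

Lemma rec_pred_orb k a b : rec_pred k a -> rec_pred k b -> rec_pred k (fun xs => a xs || b xs).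
Proof.
  intros. eapply rec_fn_ext;
    [apply (rec_pred_if k a (fun _ => true) b); auto; apply rec_pred_const|].
  intros xs _. simpl. destruct (a xs); auto.
Qed.

Lemma rec_pred_negb k a : rec_pred k a -> rec_pred k (fun xs => negb (a xs)).
Proof.
  intros. eapply rec_fn_ext;
    [apply (rec_pred_if k a (fun _ => false) (fun _ => true)); auto; apply rec_pred_const|].
  intros xs _. simpl. destruct (a xs); auto.
Qed.

Lemma rec_pred_comp1 (b : nat -> bool) k F :
  rec_pred 1 (fun xs => b (nth 0 xs 0)) -> rec_fn k F -> rec_pred k (fun xs => b (F xs)).
Proof. intros. apply (rec_fn_comp1 (fun n => if b n then 1 else 0)); auto. Qed.

Lemma forallb_seq0 n (P : nat -> bool) :
  forallb P (seq 0 n) = true <-> forall l, l < n -> P l = true.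
Proof.
  rewrite forallb_forall. setoid_rewrite in_seq. split; intros H l Hl; apply H; lia.
Qed.

Lemma existsb_seq0 n (P : nat -> bool) :
  existsb P (seq 0 n) = true <-> exists l, l < n /\ P l = true.
Proof.
  rewrite existsb_exists. setoid_rewrite in_seq.
  split; intros [l Hl]; exists l; split; try lia; apply Hl.
Qed.

Lemma rec_pred_forallb k m b :
  rec_pred (S k) (fun ys => b (nth 0 ys 0) (tl ys)) -> rec_fn k m ->
  rec_pred k (fun xs => forallb (fun l => b l xs) (seq 0 (m xs))).
Proof.
  intros Hb Hm. apply rec_fn_drop_arg1 in Hb. cbn beta in Hb. eapply rec_fn_ext.
  - apply (rec_fn_rect k (fun _ => 1) (fun l r xs => if b l xs then r else 0) m); auto.
    + apply rec_fn_const.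
    + apply (rec_fn_if (S (S k))); auto using rec_fn_nth, rec_fn_const.
  - intros xs _. simpl. induction (m xs) as [|n IH]; auto.
    rewrite seq_S, forallb_app. simpl. rewrite IH. destruct (forallb _ _), (b n xs); auto.
Qed.

Lemma rec_pred_existsb k m b :
  rec_pred (S k) (fun ys => b (nth 0 ys 0) (tl ys)) -> rec_fn k m ->
  rec_pred k (fun xs => existsb (fun l => b l xs) (seq 0 (m xs))).
Proof.
  intros Hb Hm. apply rec_fn_drop_arg1 in Hb. cbn beta in Hb. eapply rec_fn_ext.
  - apply (rec_fn_rect k (fun _ => 0) (fun l r xs => if b l xs then 1 else r) m); auto.
    + apply rec_fn_const.
    + apply (rec_fn_if (S (S k))); auto using rec_fn_nth, rec_fn_const.
  - intros xs _. simpl. induction (m xs) as [|n IH]; auto.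
    rewrite seq_S, existsb_app. simpl. rewrite IH. destruct (existsb _ _), (b n xs); auto.
Qed.

Lemma computable_rec_fn g : computable g <-> rec_fn 1 (fun xs => g (nth 0 xs 0)).
Proof.
  split; intros [c Hc]; exists c.
  - intros [|x [|]] Hx; simpl in Hx; try lia. apply Hc.
  - intros x. apply (Hc [x]). auto.
Qed.

Lemma rec_fn_triangle k F : rec_fn k F -> rec_fn k (fun xs => triangle (F xs)).
Proof.
  intros. eapply rec_fn_ext.
  - apply (rec_fn_rect k (fun _ => 0) (fun m r _ => r + S m) F); auto using rec_fn_const.
    apply rec_fn_add; [|apply rec_fn_succ]; apply rec_fn_nth.
  - intros xs _. simpl. induction (F xs); simpl; auto.
Qed.

Lemma rec_fn_cdiag k F : rec_fn k F -> rec_fn k (fun xs => cdiag (F xs)).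
Proof.
  intros. eapply rec_fn_ext.
  - apply (rec_fn_rect k (fun _ => 0)
      (fun m r _ => if triangle (S r) <=? S m then S r else r) F); auto using rec_fn_const.
    apply rec_fn_if; [apply rec_pred_leb| |];
      auto using rec_fn_triangle, rec_fn_succ, rec_fn_nth.
  - intros xs _. simpl. induction (F xs) as [|n IH]; simpl; auto.
Qed.

Lemma rec_fn_csnd k F : rec_fn k F -> rec_fn k (fun xs => csnd (F xs)).
Proof. intros. apply rec_fn_sub; auto using rec_fn_triangle, rec_fn_cdiag. Qed.

Lemma rec_fn_cfst k F : rec_fn k F -> rec_fn k (fun xs => cfst (F xs)).
Proof. intros. apply rec_fn_sub; auto using rec_fn_cdiag, rec_fn_csnd. Qed.

Lemma rec_fn_cpair k F G : rec_fn k F -> rec_fn k G -> rec_fn k (fun xs => cpair (F xs) (G xs)).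
Proof.
  intros. eapply rec_fn_ext.
  - apply (rec_fn_add k (fun xs => triangle (F xs + G xs)) G); auto.
    apply rec_fn_triangle, rec_fn_add; auto.
  - intros. symmetry; apply cpair_triangle.
Qed.

Lemma rec_fn_code_hd k F : rec_fn k F -> rec_fn k (fun xs => code_hd (F xs)).
Proof. intros. apply rec_fn_cfst, rec_fn_pred; auto. Qed.

Lemma rec_fn_code_tl k F : rec_fn k F -> rec_fn k (fun xs => code_tl (F xs)).
Proof. intros. apply rec_fn_csnd, rec_fn_pred; auto. Qed.

Lemma rec_fn_code_drop k F G :
  rec_fn k F -> rec_fn k G -> rec_fn k (fun xs => code_drop (F xs) (G xs)).
Proof.
  intros. eapply rec_fn_ext.
  - apply (rec_fn_rect k G (fun _ r _ => code_tl r) F); auto.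
    apply rec_fn_code_tl, rec_fn_nth.
  - intros xs _. unfold code_drop. simpl. induction (F xs) as [|n IH]; simpl; auto.
Qed.

Lemma rec_fn_code_nth k F G :
  rec_fn k F -> rec_fn k G -> rec_fn k (fun xs => code_nth (F xs) (G xs)).
Proof. intros. apply rec_fn_code_hd, rec_fn_code_drop; auto. Qed.

Lemma rec_fn_code_len k F : rec_fn k F -> rec_fn k (fun xs => code_len (F xs)).
Proof.
  intros HF. eapply rec_fn_ext.
  - apply (rec_fn_rect k (fun _ => 0)
      (fun m r xs => if code_drop m (F xs) =? 0 then r else S r) F); auto using rec_fn_const.
    apply rec_fn_if; auto using rec_fn_nth, rec_fn_succ.
    apply rec_pred_eqb0, rec_fn_code_drop; auto using rec_fn_nth.
    apply (rec_fn_tl (S k) (fun ys => F (tl ys))), rec_fn_tl, HF.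
  - intros xs _. unfold code_len. simpl. set (c := F xs).
    enough (E : forall n, nat_rect (fun _ => nat) 0
      (fun m r => if code_drop m c =? 0 then r else S r) n = code_len_upto n c) by apply E.
    induction n as [|n IH]; simpl; auto. rewrite IH. auto.
Qed.

Ltac rec_solve :=
  repeat (cbv beta; first
    [ assumption
    | match goal with
      | |- rec_pred _ _ =>
          first [ apply rec_pred_const | apply rec_pred_forallb | apply rec_pred_existsb
                | apply rec_pred_andb | apply rec_pred_orb | apply rec_pred_negb
                | apply rec_pred_eqb | apply rec_pred_leb | apply rec_pred_ltb
                | apply rec_pred_if | eapply rec_pred_comp1; [eassumption|] ]
      | |- rec_fn _ _ =>
          first [ apply rec_fn_nth | apply rec_fn_nth_tl | apply rec_fn_const
                | apply rec_fn_cpair | apply rec_fn_cfst | apply rec_fn_csnd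
                | apply rec_fn_code_hd | apply rec_fn_code_tl | apply rec_fn_code_nth
                | apply rec_fn_code_drop | apply rec_fn_code_len
                | apply rec_fn_if | apply rec_fn_rect | apply rec_fn_add | apply rec_fn_sub
                | apply rec_fn_pred | apply rec_fn_succ | eapply rec_fn_comp1; [eassumption|]
                | eapply rec_fn_comp1; [apply computable_rec_fn; eassumption|] ]
      end ]).

(** * A decidable certificate relation for program evaluation *)

Section EvalInd.
Variable P : recf -> list nat -> nat -> Prop.
Variable Q : list recf -> list nat -> list nat -> Prop.
Hypothesis hZero : forall xs, P RZero xs 0.
Hypothesis hSucc : forall x xs, P RSucc (x :: xs) (S x).
Hypothesis hProj : forall i xs, P (RProj i) xs (nth i xs 0).
Hypothesis hComp : forall f gs xs ys v,
  evals gs xs ys -> Q gs xs ys -> eval f ys v -> P f ys v -> P (RComp f gs) xs v.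
Hypothesis hPrim0 : forall f g xs v, eval f xs v -> P f xs v -> P (RPrim f g) (0 :: xs) v.
Hypothesis hPrimS : forall f g n xs r v,
  eval (RPrim f g) (n :: xs) r -> P (RPrim f g) (n :: xs) r ->
  eval g (n :: r :: xs) v -> P g (n :: r :: xs) v -> P (RPrim f g) (S n :: xs) v.
Hypothesis hMu : forall f xs y, eval f (y :: xs) 0 -> P f (y :: xs) 0 ->
  (forall z, z < y -> exists k, eval f (z :: xs) (S k) /\ P f (z :: xs) (S k)) ->
  P (RMu f) xs y.
Hypothesis hNil : forall xs, Q [] xs [].
Hypothesis hCons : forall g gs xs y ys,
  eval g xs y -> P g xs y -> evals gs xs ys -> Q gs xs ys -> Q (g :: gs) xs (y :: ys).

(* The generated scheme gives no induction hypothesis under the [exists] of [eMu]. *)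
Fixpoint eval_ind_nested c xs v (H : eval c xs v) {struct H} : P c xs v :=
  match H in eval c xs v return P c xs v with
  | eZero xs => hZero xs
  | eSucc x xs => hSucc x xs
  | eProj i xs => hProj i xs
  | eComp f gs xs ys v H1 H2 =>
      hComp f gs xs ys v H1 (evals_ind_nested _ _ _ H1) H2 (eval_ind_nested _ _ _ H2)
  | ePrim0 f g xs v H1 => hPrim0 f g xs v H1 (eval_ind_nested _ _ _ H1)
  | ePrimS f g n xs r v H1 H2 =>
      hPrimS f g n xs r v H1 (eval_ind_nested _ _ _ H1) H2 (eval_ind_nested _ _ _ H2)
  | eMu f xs y H1 H2 =>
      hMu f xs y H1 (eval_ind_nested _ _ _ H1)
        (fun z hz => match H2 z hz with
                     | ex_intro _ k e => ex_intro _ k (conj e (eval_ind_nested _ _ _ e))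
                     end)
  end
with evals_ind_nested gs xs ys (H : evals gs xs ys) {struct H} : Q gs xs ys :=
  match H in evals gs xs ys return Q gs xs ys with
  | esNil xs => hNil xs
  | esCons g gs xs y ys H1 H2 =>
      hCons g gs xs y ys H1 (eval_ind_nested _ _ _ H1) H2 (evals_ind_nested _ _ _ H2)
  end.
End EvalInd.

Lemma eval_det c xs v : eval c xs v -> forall v', eval c xs v' -> v = v'.
Proof.
  revert c xs v.
  apply (eval_ind_nested (fun c xs v => forall v', eval c xs v' -> v = v')
           (fun gs xs ys => forall ys', evals gs xs ys' -> ys = ys')).
  - intros xs v' H; inversion H; auto.
  - intros x xs v' H; inversion H; auto.
  - intros i xs v' H; inversion H; auto.
  - intros f gs xs ys v _ IH1 _ IH2 v' H. inversion H; subst.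
    match goal with h : evals _ _ _ |- _ => apply IH1 in h end. subst. auto.
  - intros f g xs v _ IH v' H. inversion H; subst. auto.
  - intros f g n xs r v _ IH1 _ IH2 v' H. inversion H; subst.
    match goal with h : eval (RPrim _ _) _ _ |- _ => apply IH1 in h end. subst. auto.
  - intros f xs y _ IH0 IH v' H. inversion H as [| | | | | |f' xs' y' H0 Hlt]; subst.
    destruct (Nat.lt_trichotomy y v') as [h|[h|h]]; auto.
    + destruct (Hlt y h) as [k hk]. apply IH0 in hk. discriminate.
    + destruct (IH v' h) as [k [_ hk]]. apply hk in H0. discriminate.
  - intros xs ys' H; inversion H; auto.
  - intros g gs xs y ys _ IH1 _ IH2 ys' H. inversion H; subst. f_equal; auto.
Qed.

Lemma evals_nth gs xs ys :
  length gs = length ys ->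
  (forall i, i < length gs -> eval (nth i gs RZero) xs (nth i ys 0)) -> evals gs xs ys.
Proof.
  revert ys; induction gs; intros [|y ys] Hl H; simpl in *; try discriminate; constructor.
  - apply (H 0); lia.
  - apply IHgs; auto. intros i hi. apply (H (S i)); lia.
Qed.

Fixpoint rcode (c : recf) : nat :=
  match c with
  | RZero => cpair 0 0
  | RSucc => cpair 1 0
  | RProj i => cpair 2 i
  | RComp f gs => cpair 3 (cpair (rcode f) (code_seq (map rcode gs)))
  | RPrim f g => cpair 4 (cpair (rcode f) (rcode g))
  | RMu f => cpair 5 (rcode f)
  end.

Definition code_cons (x c : nat) : nat := S (cpair x c).

(* The judgment "program [c] maps the input coded by [xs] to [v]"; below, for a judgment [J],
   [cfst J], [cfst (csnd J)] and [csnd (csnd J)] are its program, input and value. *)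
Definition judgment (c xs v : nat) : nat := cpair c (cpair xs v).

(* [just_check ex J] checks that [J] follows by one evaluation rule from judgments already
   available, where [ex f] tests whether some available judgment satisfies [f]. *)
Definition just_check (ex : (nat -> bool) -> bool) (J : nat) : bool :=
  let c := cfst J in let xs := cfst (csnd J) in let v := csnd (csnd J) in
  let tag := cfst c in let arg := csnd c in
  if tag =? 0 then v =? 0
  else if tag =? 1 then negb (xs =? 0) && (v =? S (code_hd xs))
  else if tag =? 2 then v =? code_nth arg xs
  else if tag =? 3 then
    ex (fun J' => (cfst J' =? cfst arg) && (csnd (csnd J') =? v)
      && (code_len (csnd arg) =? code_len (cfst (csnd J')))
      && forallb (fun i => ex (fun J'' =>
           J'' =? judgment (code_nth i (csnd arg)) xs (code_nth i (cfst (csnd J')))))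
         (seq 0 (code_len (csnd arg))))
  else if tag =? 4 then
    negb (xs =? 0) &&
    (if code_hd xs =? 0 then ex (fun J' => J' =? judgment (cfst arg) (code_tl xs) v)
     else ex (fun J' => (cfst J' =? c)
       && (cfst (csnd J') =? code_cons (pred (code_hd xs)) (code_tl xs))
       && ex (fun J'' => J'' =? judgment (csnd arg)
            (code_cons (pred (code_hd xs)) (code_cons (csnd (csnd J')) (code_tl xs))) v)))
  else if tag =? 5 then
    ex (fun J' => J' =? judgment arg (code_cons v xs) 0)
    && forallb (fun z => ex (fun J' => (cfst J' =? arg)
         && (cfst (csnd J') =? code_cons z xs) && negb (csnd (csnd J') =? 0))) (seq 0 v)
  else false.

Definition justified (L : list nat) (J : nat) : bool := just_check (fun f => existsb f L) J.

Fixpoint derivation (L : list nat) : Prop :=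
  match L with
  | [] => True
  | J :: L' => justified L' J = true /\ derivation L'
  end.

Lemma existsb_eqb_In x L : existsb (fun y => y =? x) L = true <-> In x L.
Proof.
  rewrite existsb_exists. split.
  - intros [y [Hy E]]. apply Nat.eqb_eq in E. subst. auto.
  - intros H. exists x. rewrite Nat.eqb_refl. auto.
Qed.

Lemma just_check_mono (ex1 ex2 : (nat -> bool) -> bool) J :
  (forall f g, (forall x, f x = true -> g x = true) -> ex1 f = true -> ex2 g = true) ->
  just_check ex1 J = true -> just_check ex2 J = true.
Proof.
  intros Hex. unfold just_check. cbv zeta.
  repeat match goal with |- context [if ?b then _ else _] => destruct b end; auto;
  repeat match goal with
    | |- _ => progress (intros; rewrite ?andb_true_iff, ?forallb_forall in * )
    | H : _ /\ _ |- _ => destruct H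
    | |- _ /\ _ => split
    | H : forall z, In z ?l -> _, Hz : In ?y ?l |- _ => specialize (H y Hz)
    | H : ex1 ?f = true |- ex2 ?g = true => apply (Hex f g); [|exact H]
    end; assumption.
Qed.

Lemma justified_incl L L' J : incl L L' -> justified L J = true -> justified L' J = true.
Proof.
  intros Hi. apply just_check_mono. intros f g Hfg.
  rewrite !existsb_exists. intros [x [Hx Hf]]. exists x; auto.
Qed.

Lemma derivation_app L1 L2 : derivation L1 -> derivation L2 -> derivation (L1 ++ L2).
Proof.
  induction L1 as [|J L1 IH]; simpl; auto. intros [HJ H1] H2. split; auto.
  apply (justified_incl L1); auto. intros x; rewrite in_app_iff; auto.
Qed.

Lemma judgment_eta J : judgment (cfst J) (cfst (csnd J)) (csnd (csnd J)) = J.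
Proof. unfold judgment. rewrite !cpair_cfst_csnd. auto. Qed.

Lemma nth_map_rcode gs i : nth i (map rcode gs) 0 = rcode (nth i gs RZero).
Proof. revert i; induction gs; intros [|i]; simpl; auto. Qed.

Lemma cfst_judgment c xs v : cfst (judgment c xs v) = c.
Proof. apply cfst_cpair. Qed.

Lemma csnd_judgment c xs v : csnd (judgment c xs v) = cpair xs v.
Proof. apply csnd_cpair. Qed.

Ltac judgment_simpl :=
  unfold justified, just_check; cbv zeta; cbn [rcode];
  repeat rewrite ?cfst_judgment, ?csnd_judgment, ?cfst_cpair, ?csnd_cpair; cbn [Nat.eqb].

Lemma justified_zero L xs v : justified L (judgment (rcode RZero) xs v) = true <-> v = 0.
Proof. judgment_simpl. apply Nat.eqb_eq. Qed.

Lemma justified_succ L xs v :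
  justified L (judgment (rcode RSucc) (code_seq xs) v) = true <->
  match xs with [] => False | x :: _ => v = S x end.
Proof.
  judgment_simpl. destruct xs as [|x xs]; [simpl; split; [discriminate|tauto]|].
  rewrite code_hd_cons. cbn [code_seq Nat.eqb negb andb]. apply Nat.eqb_eq.
Qed.

Lemma justified_proj L i xs v :
  justified L (judgment (rcode (RProj i)) (code_seq xs) v) = true <-> v = nth i xs 0.
Proof. judgment_simpl. rewrite Nat.eqb_eq, code_nth_seq. tauto. Qed.

Lemma justified_comp L f gs xs v :
  justified L (judgment (rcode (RComp f gs)) (code_seq xs) v) = true <->
  exists ys, In (judgment (rcode f) (code_seq ys) v) L /\ length ys = length gs /\
    forall i, i < length gs -> In (judgment (rcode (nth i gs RZero)) (code_seq xs) (nth i ys 0)) L.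
Proof.
  judgment_simpl. rewrite existsb_exists, code_len_seq, length_map. split.
  - intros [J [HJ E]]. rewrite !andb_true_iff, !Nat.eqb_eq, forallb_seq0 in E.
    destruct E as [[[Ef Ev] El] Eargs].
    destruct (code_seq_surj (cfst (csnd J))) as [ys Hys].
    rewrite <- Hys in El, Eargs. rewrite code_len_seq in El. exists ys. repeat split; auto.
    + rewrite <- Ef, <- Ev, Hys, judgment_eta. auto.
    + intros i hi. specialize (Eargs i hi). apply existsb_eqb_In in Eargs.
      rewrite code_nth_seq, nth_map_rcode, code_nth_seq in Eargs. auto.
  - intros [ys [HJ [El Eargs]]]. exists (judgment (rcode f) (code_seq ys) v).
    repeat rewrite ?cfst_judgment, ?csnd_judgment, ?cfst_cpair, ?csnd_cpair.
    rewrite code_len_seq.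
    split; auto. rewrite !andb_true_iff, !Nat.eqb_eq, forallb_seq0. repeat split; auto.
    intros i hi. apply existsb_eqb_In. rewrite !code_nth_seq, nth_map_rcode. auto.
Qed.

Lemma justified_prim L f g xs v :
  justified L (judgment (rcode (RPrim f g)) (code_seq xs) v) = true <->
  match xs with
  | [] => False
  | 0 :: xs' => In (judgment (rcode f) (code_seq xs') v) L
  | S n :: xs' => exists r, In (judgment (rcode (RPrim f g)) (code_seq (n :: xs')) r) L /\
                       In (judgment (rcode g) (code_seq (n :: r :: xs')) v) L
  end.
Proof.
  judgment_simpl. destruct xs as [|[|n] xs]; [simpl; split; [discriminate|tauto]| |];
    rewrite code_hd_cons, code_tl_cons; cbn [code_seq Nat.eqb negb andb pred].
  - apply existsb_eqb_In.
  - rewrite existsb_exists. split.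
    + intros [J [HJ E]]. rewrite !andb_true_iff, !Nat.eqb_eq, existsb_eqb_In in E.
      destruct E as [[Ec Ei] Eg]. exists (csnd (csnd J)). split; [|exact Eg].
      rewrite <- (judgment_eta J), Ec, Ei in HJ. exact HJ.
    + intros [r [HJ Hg]]. eexists. split; [exact HJ|].
      repeat rewrite ?cfst_judgment, ?csnd_judgment, ?cfst_cpair, ?csnd_cpair.
      rewrite !Nat.eqb_refl. apply existsb_eqb_In. exact Hg.
Qed.

Lemma justified_mu L f xs y :
  justified L (judgment (rcode (RMu f)) (code_seq xs) y) = true <->
  In (judgment (rcode f) (code_seq (y :: xs)) 0) L /\
  forall z, z < y -> exists k, In (judgment (rcode f) (code_seq (z :: xs)) (S k)) L.
Proof.
  judgment_simpl. rewrite andb_true_iff, forallb_seq0, existsb_eqb_In.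
  apply and_iff_compat_l. split; intros H z hz; specialize (H z hz).
  - apply existsb_exists in H. destruct H as [J [HJ E]].
    rewrite !andb_true_iff, !Nat.eqb_eq, negb_true_iff, Nat.eqb_neq in E.
    destruct E as [[Ef Ei] Ev]. destruct (csnd (csnd J)) as [|k] eqn:Ek; [contradiction|].
    exists k. rewrite <- (judgment_eta J), Ef, Ei, Ek in HJ. exact HJ.
  - destruct H as [k Hk]. apply existsb_exists. eexists. split; [exact Hk|].
    repeat rewrite ?cfst_judgment, ?csnd_judgment, ?cfst_cpair, ?csnd_cpair.
    rewrite !Nat.eqb_refl. reflexivity.
Qed.

Lemma derivation_sound L :
  derivation L -> forall c xs v, In (judgment (rcode c) (code_seq xs) v) L -> eval c xs v.
Proof.
  induction L as [|J L IH]; simpl; [tauto|].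
  intros [HJ HL] c xs v [E|Hin]; [|apply IH; auto]. specialize (IH HL). subst J.
  destruct c.
  - apply justified_zero in HJ. subst. constructor.
  - apply justified_succ in HJ. destruct xs; [contradiction|]. subst. constructor.
  - apply justified_proj in HJ. subst. constructor.
  - apply justified_comp in HJ. destruct HJ as [ys [Hf [Hl Hgs]]].
    econstructor; [apply evals_nth|apply IH, Hf]; auto.
  - apply justified_prim in HJ. destruct xs as [|[|n] xs]; [contradiction|constructor; auto|].
    destruct HJ as [r [H1 H2]]. econstructor; apply IH; eauto.
  - apply justified_mu in HJ. destruct HJ as [H0 Hlt]. constructor; auto.
    intros z hz. destruct (Hlt z hz) as [k Hk]. exists k; auto.
Qed.

Lemma derivation_extend L J :
  derivation L -> justified L J = true -> exists L', derivation L' /\ In J L'.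
Proof. intros. exists (J :: L). simpl. auto. Qed.

Lemma derivation_collect (Q : nat -> nat -> Prop) y :
  (forall z, z < y -> exists L, derivation L /\ exists J, Q z J /\ In J L) ->
  exists L, derivation L /\ forall z, z < y -> exists J, Q z J /\ In J L.
Proof.
  induction y as [|y IH]; intros H; [exists []; split; simpl; auto; lia|].
  destruct IH as [L1 [D1 H1]]; [intros; apply H; lia|].
  destruct (H y) as [L2 [D2 [J [HQ HJ]]]]; [lia|].
  exists (L1 ++ L2). split; [apply derivation_app; auto|].
  intros z hz. destruct (Nat.eq_dec z y) as [->|hne].
  - exists J. rewrite in_app_iff. auto.
  - destruct (H1 z) as [J' [HQ' HJ']]; [lia|]. exists J'. rewrite in_app_iff. auto.
Qed.

Lemma derivation_complete c xs v :
  eval c xs v -> exists L, derivation L /\ In (judgment (rcode c) (code_seq xs) v) L.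
Proof.
  revert c xs v.
  apply (eval_ind_nested
    (fun c xs v => exists L, derivation L /\ In (judgment (rcode c) (code_seq xs) v) L)
    (fun gs xs ys => exists L, derivation L /\ length gs = length ys /\
       forall i, i < length gs ->
         In (judgment (rcode (nth i gs RZero)) (code_seq xs) (nth i ys 0)) L)).
  - intros xs. apply (derivation_extend []); [exact I|]. apply justified_zero. auto.
  - intros x xs. apply (derivation_extend []); [exact I|]. apply justified_succ. auto.
  - intros i xs. apply (derivation_extend []); [exact I|]. apply justified_proj. auto.
  - intros f gs xs ys v _ [L1 [D1 [Hl H1]]] _ [L2 [D2 H2]].
    apply (derivation_extend (L1 ++ L2)); [apply derivation_app; auto|].
    apply justified_comp. exists ys. rewrite in_app_iff. repeat split; auto.
    intros i hi. rewrite in_app_iff. auto.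
  - intros f g xs v _ [L [D H]]. apply (derivation_extend L); auto. apply justified_prim. auto.
  - intros f g n xs r v _ [L1 [D1 H1]] _ [L2 [D2 H2]].
    apply (derivation_extend (L1 ++ L2)); [apply derivation_app; auto|].
    apply justified_prim. exists r. rewrite !in_app_iff. auto.
  - intros f xs y _ [L0 [D0 H0]] H.
    destruct (derivation_collect
      (fun z J => exists k, J = judgment (rcode f) (code_seq (z :: xs)) (S k)) y)
      as [L1 [D1 H1]].
    { intros z hz. destruct (H z hz) as [k [_ [L [D HL]]]].
      exists L. split; [exact D|]. eexists. split; [exists k; reflexivity|exact HL]. }
    apply (derivation_extend (L0 ++ L1)); [apply derivation_app; auto|].
    apply justified_mu. rewrite in_app_iff. split; auto.
    intros z hz. destruct (H1 z hz) as [J [[k ->] HJ]]. exists k. rewrite in_app_iff. auto.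
  - intros xs. exists []. simpl. repeat split; auto. lia.
  - intros g gs xs y ys _ [L1 [D1 H1]] _ [L2 [D2 [Hl H2]]].
    exists (L1 ++ L2). split; [apply derivation_app; auto|]. simpl. split; [lia|].
    intros [|i] hi; rewrite in_app_iff; auto. right. apply H2. simpl in hi. lia.
Qed.

Definition code_exists (p : nat) (f : nat -> bool) : bool :=
  existsb (fun m => f (code_nth m p)) (seq 0 (code_len p)).

Lemma code_exists_seq L f : code_exists (code_seq L) f = existsb f L.
Proof.
  apply Bool.eq_iff_eq_true. unfold code_exists.
  rewrite code_len_seq, existsb_seq0, existsb_exists. split.
  - intros [m [hm Hf]]. rewrite code_nth_seq in Hf. exists (nth m L 0). split; auto.
    apply nth_In; auto.
  - intros [x [Hx Hf]]. destruct (In_nth L x 0 Hx) as [m [hm <-]].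
    exists m. rewrite code_nth_seq. auto.
Qed.

Lemma just_check_code_seq L J : just_check (code_exists (code_seq L)) J = justified L J.
Proof.
  apply Bool.eq_iff_eq_true. unfold justified.
  split; apply just_check_mono; intros f g Hfg; rewrite ?code_exists_seq, !existsb_exists;
    intros [x [Hx Hf]]; eauto.
Qed.

Definition valid (d : nat) : bool :=
  forallb (fun k => just_check (code_exists (code_drop (S k) d)) (code_nth k d))
    (seq 0 (code_len d)).

Definition contains (d J : nat) : bool := code_exists d (fun J' => J' =? J).

Lemma derivation_nth L :
  derivation L <-> forall k, k < length L -> justified (skipn (S k) L) (nth k L 0) = true.
Proof.
  induction L as [|J L IH]; simpl; [split; auto; intros; lia|]. rewrite IH. split.
  - intros [HJ HL] [|k] hk; auto. apply HL. lia.
  - intros H. split; [apply (H 0); lia|]. intros k hk. apply (H (S k)). lia.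
Qed.

Lemma valid_code_seq L : valid (code_seq L) = true <-> derivation L.
Proof.
  unfold valid. rewrite derivation_nth, code_len_seq, forallb_seq0.
  split; intros H k hk; specialize (H k hk);
    rewrite code_drop_seq, code_nth_seq, just_check_code_seq in *; auto.
Qed.

Theorem eval_iff_certificate c xs v :
  eval c xs v <->
  exists d, valid d = true /\ contains d (judgment (rcode c) (code_seq xs) v) = true.
Proof.
  split.
  - intros H. destruct (derivation_complete c xs v H) as [L [D HL]].
    exists (code_seq L). unfold contains.
    rewrite valid_code_seq, code_exists_seq, existsb_eqb_In. auto.
  - intros [d [Hd Hc]]. destruct (code_seq_surj d) as [L <-].
    unfold contains in Hc. rewrite code_exists_seq, existsb_eqb_In in Hc.
    apply valid_code_seq in Hd. apply (derivation_sound L); auto.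
Qed.

Lemma rec_pred_valid k F : rec_fn k F -> rec_pred k (fun xs => valid (F xs)).
Proof.
  intros. apply (rec_pred_comp1 valid); auto.
  unfold valid, just_check, code_exists, judgment, code_cons. cbv zeta. rec_solve.
Qed.

Lemma rec_pred_contains k F G :
  rec_fn k F -> rec_fn k G -> rec_pred k (fun xs => contains (F xs) (G xs)).
Proof.
  intros HF HG. unfold contains, code_exists.
  apply rec_pred_existsb; [|apply rec_fn_code_len; auto].
  apply rec_pred_eqb; [apply rec_fn_code_nth; [apply rec_fn_nth|]|]; apply rec_fn_tl; auto.
Qed.

(** * Closure properties of the arithmetical hierarchy *)

Definition computable_bool (b : nat -> bool) : Prop := rec_pred 1 (fun xs => b (nth 0 xs 0)).

Lemma decidable_set_bool b : computable_bool b -> decidable_set (fun x => b x = true).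
Proof.
  intros Hb. destruct (rec_pred_negb 1 _ Hb) as [c Hc]. exists c. intros x.
  specialize (Hc [x] eq_refl). simpl in Hc.
  destruct (b x); simpl in Hc; split; intros; auto; congruence.
Qed.

Lemma decidable_set_to_bool A :
  decidable_set A -> exists b, computable_bool b /\ forall x, A x <-> b x = true.
Proof.
  intros [c Hc]. exists (fun x => if excluded_middle_informative (A x) then true else false).
  split.
  - assert (Hneg : rec_pred 1 (fun xs =>
      negb (if excluded_middle_informative (A (nth 0 xs 0)) then true else false))).
    { exists c. intros [|x [|]] h; simpl in h; try lia. simpl.
      destruct (excluded_middle_informative (A x)); simpl; apply Hc; auto. }
    eapply rec_fn_ext; [apply rec_pred_negb, Hneg|].
    intros xs _. simpl. destruct (excluded_middle_informative _); auto.
  - intros x. destruct (excluded_middle_informative (A x)); split; auto; congruence.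
Qed.

Lemma Sigma0_ext p A A' : (forall x, A x <-> A' x) -> Sigma0 p A -> Sigma0 p A'.
Proof.
  destruct p; simpl.
  - intros H [c Hc]. exists c. intros x. rewrite <- H. auto.
  - intros H [B [HB HA]]. exists B; split; auto. intros x. rewrite <- H. auto.
Qed.

Lemma Sigma0_preimage p A h : Sigma0 p A -> computable h -> Sigma0 p (fun x => A (h x)).
Proof.
  revert A h; induction p; intros A h HA Hh; simpl in *.
  - destruct HA as [c Hc], Hh as [ch Hh]. exists (RComp c [ch]). intros x.
    split; intros H; econstructor; try (constructor; [apply Hh|constructor]); apply Hc; auto.
  - destruct HA as [B [HB HA]]. exists (fun m => B (cpair (h (cfst m)) (csnd m))). split.
    + apply (IHp B (fun m => cpair (h (cfst m)) (csnd m))); auto.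
      apply computable_rec_fn. rec_solve.
    + intros x. rewrite HA.
      split; intros [y hy]; exists y; rewrite cfst_cpair, csnd_cpair in *; auto.
Qed.

Lemma Sigma0_decidable p A : decidable_set A -> Sigma0 p A.
Proof.
  revert A; induction p as [|p IH]; intros A HA; simpl; auto.
  destruct (decidable_set_to_bool A HA) as [b [Hb HAb]].
  exists (fun m => b (cfst m) = false). split.
  - apply IH, (Sigma0_ext 0 (fun m => negb (b (cfst m)) = true)).
    + intros. rewrite negb_true_iff. tauto.
    + apply decidable_set_bool. unfold computable_bool in *. rec_solve.
  - intros x. rewrite HAb. split.
    + intros h. exists 0. rewrite cfst_cpair. congruence.
    + intros [y hy]. rewrite cfst_cpair in hy. destruct (b x); auto.
Qed.

Lemma Sigma0_bool p b : computable_bool b -> Sigma0 p (fun x => b x = true).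
Proof. intros. apply Sigma0_decidable, decidable_set_bool. auto. Qed.

Ltac cpair_simpl := repeat rewrite ?cfst_cpair, ?csnd_cpair in *.

(* Conjunction and disjunction are proved together, as each uses the other one level down. *)
Lemma Sigma0_and_or p :
  (forall A B, Sigma0 p A -> Sigma0 p B -> Sigma0 p (fun x => A x /\ B x)) /\
  (forall A B, Sigma0 p A -> Sigma0 p B -> Sigma0 p (fun x => A x \/ B x)).
Proof.
  induction p as [|p [IHand IHor]].
  - split; intros A B HA HB;
      destruct (decidable_set_to_bool A HA) as [a [Ha HAa]],
               (decidable_set_to_bool B HB) as [b [Hb HBb]].
    + apply (Sigma0_ext 0 (fun x => a x && b x = true)).
      { intros. rewrite andb_true_iff, HAa, HBb. tauto. }
      apply Sigma0_bool. unfold computable_bool in *. rec_solve.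
    + apply (Sigma0_ext 0 (fun x => a x || b x = true)).
      { intros. rewrite orb_true_iff, HAa, HBb. tauto. }
      apply Sigma0_bool. unfold computable_bool in *. rec_solve.
  - split; intros A B [CA [HCA HA]] [CB [HCB HB]].
    + exists (fun m => CA (cpair (cfst m) (cfst (csnd m))) \/ CB (cpair (cfst m) (csnd (csnd m)))).
      split.
      * apply IHor; apply Sigma0_preimage; auto; apply computable_rec_fn; rec_solve.
      * intros x. rewrite HA, HB. split.
        -- intros [[y1 h1] [y2 h2]]. exists (cpair y1 y2). cpair_simpl. tauto.
        -- intros [w hw]. cpair_simpl. apply not_or_and in hw. destruct hw.
           split; [exists (cfst w)|exists (csnd w)]; auto.
    + exists (fun m => CA m /\ CB m). split; [apply IHand; auto|].
      intros x. rewrite HA, HB. split.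
      * intros [[y h]|[y h]]; exists y; tauto.
      * intros [y h]. apply not_and_or in h. destruct h; [left|right]; eauto.
Qed.

Lemma Sigma0_and p A B : Sigma0 p A -> Sigma0 p B -> Sigma0 p (fun x => A x /\ B x).
Proof. apply Sigma0_and_or. Qed.

Lemma Sigma0_or p A B : Sigma0 p A -> Sigma0 p B -> Sigma0 p (fun x => A x \/ B x).
Proof. apply Sigma0_and_or. Qed.

Lemma list_choice (P : nat -> nat -> Prop) m :
  (forall l, l < m -> exists y, P l y) ->
  exists ys, length ys = m /\ forall l, l < m -> P l (nth l ys 0).
Proof.
  induction m as [|m IH]; intros H; [exists []; split; auto; intros; lia|].
  destruct IH as [ys [hl hys]]; [intros; apply H; lia|].
  destruct (H m) as [y hy]; [lia|].
  exists (ys ++ [y]). split; [rewrite length_app; simpl; lia|].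
  intros l hl'. destruct (Nat.eq_dec l m) as [->|hne].
  - rewrite app_nth2 by lia. rewrite hl, Nat.sub_diag. exact hy.
  - rewrite app_nth1; [apply hys|]; lia.
Qed.

Lemma Sigma0_bounded_exists p B m :
  Sigma0 p B -> computable m -> Sigma0 p (fun n => exists l, l < m n /\ B (cpair n l)).
Proof.
  destruct p as [|p]; intros HB Hm.
  - destruct (decidable_set_to_bool B HB) as [b [Hb HBb]].
    apply (Sigma0_ext 0 (fun n => existsb (fun l => b (cpair n l)) (seq 0 (m n)) = true)).
    { intros n. rewrite existsb_seq0.
      split; intros [l [h1 h2]]; exists l; split; auto; apply HBb; auto. }
    apply Sigma0_bool. unfold computable_bool in *. rec_solve.
  - destruct HB as [C [HC HB]].
    exists (fun w => (m (cfst w) <=? cfst (csnd w)) = true \/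
                     C (cpair (cpair (cfst w) (cfst (csnd w))) (csnd (csnd w)))).
    split.
    + apply Sigma0_or.
      * apply Sigma0_bool. unfold computable_bool. rec_solve.
      * apply (Sigma0_preimage p C); auto. apply computable_rec_fn. rec_solve.
    + intros n. split.
      * intros [l [hl hB]]. apply HB in hB. destruct hB as [y hy].
        exists (cpair l y). cpair_simpl. intros [h|h]; auto. apply Nat.leb_le in h. lia.
      * intros [w hw]. cpair_simpl. apply not_or_and in hw. destruct hw as [h1 h2].
        exists (cfst w). split; [apply Nat.leb_gt, not_true_is_false; auto|].
        apply HB. exists (csnd w). auto.
Qed.

(* At level [S p] the finitely many witnesses are coded as one sequence, which leaves a bounded
   existential quantifier at level [p]. *)
Lemma Sigma0_bounded_forall p B m :
  Sigma0 p B -> computable m -> Sigma0 p (fun n => forall l, l < m n -> B (cpair n l)).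
Proof.
  destruct p as [|p]; intros HB Hm.
  - destruct (decidable_set_to_bool B HB) as [b [Hb HBb]].
    apply (Sigma0_ext 0 (fun n => forallb (fun l => b (cpair n l)) (seq 0 (m n)) = true)).
    { intros n. rewrite forallb_seq0. split; intros h l hl; apply HBb; auto. }
    apply Sigma0_bool. unfold computable_bool in *. rec_solve.
  - destruct HB as [C [HC HB]].
    exists (fun w => exists l, l < m (cfst w) /\
                     C (cpair (cpair (cfst w) l) (code_nth l (csnd w)))).
    split.
    + eapply Sigma0_ext;
        [|apply (Sigma0_bounded_exists p (fun u => C (cpair (cpair (cfst (cfst u)) (csnd u))
                                             (code_nth (csnd u) (csnd (cfst u)))))
                                        (fun w => m (cfst w)))].
      * intros w. split; intros [l Hl]; exists l; cpair_simpl; auto.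
      * apply Sigma0_preimage; auto. apply computable_rec_fn. rec_solve.
      * apply computable_rec_fn. rec_solve.
    + intros n. split.
      * intros H. destruct (list_choice (fun l y => ~ C (cpair (cpair n l) y)) (m n))
          as [ys [_ hys]]; [intros l hl; apply HB; auto|].
        exists (code_seq ys). cpair_simpl. intros [l [hl hc]].
        rewrite code_nth_seq in hc. apply (hys l hl). auto.
      * intros [w hw] l hl. apply HB. exists (code_nth l w). intros hc. apply hw.
        exists l. cpair_simpl. auto.
Qed.

Lemma Sigma0_exists p B : Sigma0 (S p) B -> Sigma0 (S p) (fun n => exists z, B (cpair n z)).
Proof.
  intros [C [HC HB]].
  exists (fun w => C (cpair (cpair (cfst w) (cfst (csnd w))) (csnd (csnd w)))). split.
  - apply Sigma0_preimage; auto. apply computable_rec_fn. rec_solve.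
  - intros n. split.
    + intros [z hz]. apply HB in hz. destruct hz as [y hy]. exists (cpair z y). cpair_simpl. auto.
    + intros [w hw]. cpair_simpl. exists (cfst w). apply HB. exists (csnd w). auto.
Qed.

(** * Universal sets *)

(* [sigma1_univ (cpair e x)]: for some [y], program [e] outputs [1] on [cpair x y], i.e. rejects
   it as a decider in the sense of [decidable_set]. *)
Definition sigma1_univ (n : nat) : Prop :=
  exists y d, valid d = true /\
    contains d (judgment (cfst n) (code_seq [cpair (csnd n) y]) 1) = true.

Lemma Sigma0_sigma1_univ : Sigma0 1 sigma1_univ.
Proof.
  exists (fun w => negb (valid (csnd (csnd w)) && contains (csnd (csnd w))
    (judgment (cfst (cfst w)) (code_seq [cpair (csnd (cfst w)) (cfst (csnd w))]) 1)) = true).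
  split.
  - apply decidable_set_bool. unfold computable_bool.
    apply rec_pred_negb, rec_pred_andb; [apply rec_pred_valid|apply rec_pred_contains];
      unfold judgment; cbn [code_seq]; rec_solve.
  - intros n. unfold sigma1_univ. split.
    + intros [y [d [h1 h2]]]. exists (cpair y d). cpair_simpl. rewrite h1, h2. discriminate.
    + intros [w hw]. cpair_simpl. rewrite negb_true_iff, not_false_iff_true, andb_true_iff in hw.
      exists (cfst w), (csnd w). exact hw.
Qed.

Lemma sigma1_univ_universal A : Sigma0 1 A -> exists e, forall x, A x <-> sigma1_univ (cpair e x).
Proof.
  intros [B [[c Hc] HA]]. exists (rcode c). intros x. rewrite HA. unfold sigma1_univ.
  cpair_simpl. split.
  - intros [y hy]. exists y. apply eval_iff_certificate, Hc. auto.
  - intros [y Hy]. exists y. intros hB. apply eval_iff_certificate in Hy.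
    apply Hc in hB. pose proof (eval_det _ _ _ hB _ Hy). discriminate.
Qed.

Fixpoint sigma_univ (q n : nat) : Prop :=
  match q with
  | 0 => sigma1_univ n
  | S q' => exists y, ~ sigma_univ q' (cpair (cfst n) (cpair (csnd n) y))
  end.

Lemma Sigma0_sigma_univ q : Sigma0 (S q) (sigma_univ q).
Proof.
  induction q as [|q IH]; [apply Sigma0_sigma1_univ|].
  exists (fun m => sigma_univ q (cpair (cfst (cfst m)) (cpair (csnd (cfst m)) (csnd m)))). split.
  - apply Sigma0_preimage; auto. apply computable_rec_fn. rec_solve.
  - intros n. simpl. split; intros [y hy]; exists y; cpair_simpl; auto.
Qed.

Lemma sigma_univ_universal q A :
  Sigma0 (S q) A -> exists e, forall x, A x <-> sigma_univ q (cpair e x).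
Proof.
  revert A; induction q as [|q IH]; intros A HA; [apply sigma1_univ_universal; auto|].
  destruct HA as [B [HB HA]]. destruct (IH B HB) as [e He]. exists e. intros x.
  rewrite HA. simpl. cpair_simpl. split; intros [y hy]; exists y; rewrite He in *; auto.
Qed.

(** * Walks and the equivalence relation *)

Fixpoint walk (R : nat -> nat -> Prop) (x : nat) (l : list nat) : Prop :=
  match l with
  | [] => True
  | y :: l' => R x y /\ walk R y l'
  end.

Fixpoint walk_end (x : nat) (l : list nat) : nat :=
  match l with
  | [] => x
  | y :: l' => walk_end y l'
  end.

Lemma walk_app R x l1 l2 : walk R x (l1 ++ l2) <-> walk R x l1 /\ walk R (walk_end x l1) l2.
Proof. revert x; induction l1 as [|y l1 IH]; intros x; simpl; [tauto|]. rewrite IH. tauto. Qed.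

Lemma walk_end_app x l1 l2 : walk_end x (l1 ++ l2) = walk_end (walk_end x l1) l2.
Proof. revert x; induction l1; simpl; auto. Qed.

Lemma walk_rev (R : nat -> nat -> Prop) x l :
  (forall u v, R u v -> R v u) ->
  walk R x l -> exists l', walk R (walk_end x l) l' /\ walk_end (walk_end x l) l' = x.
Proof.
  intros Rsym. revert x; induction l as [|y l IH]; intros x H; [exists []; simpl; auto|].
  destruct H as [h1 h2]. destruct (IH y h2) as [l' [s' e']]. simpl.
  exists (l' ++ [x]). rewrite walk_app, walk_end_app, e'. simpl. auto.
Qed.

Lemma walk_nth R x l :
  walk R x l <->
  forall k, k < length l -> R (if k =? 0 then x else nth (pred k) l 0) (nth k l 0).
Proof.
  revert x; induction l as [|y l IH]; intros x; simpl; [split; auto; intros; lia|].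
  rewrite IH. split.
  - intros [h1 h2] [|k] hk; simpl; auto. specialize (h2 k ltac:(lia)). destruct k; auto.
  - intros H. split; [apply (H 0); lia|]. intros k hk.
    specialize (H (S k) ltac:(lia)). simpl in H. destruct k; auto.
Qed.

Lemma walk_end_nth x l : walk_end x l = if length l =? 0 then x else nth (pred (length l)) l 0.
Proof. revert x; induction l as [|y l IH]; intros x; simpl; auto. rewrite IH. destruct l; auto. Qed.

Lemma Sigma0_rel_iff p R : Sigma0_rel p R <-> Sigma0 p (fun n => R (cfst n) (csnd n)).
Proof.
  unfold Sigma0_rel. split; apply Sigma0_ext; intros n; split.
  - intros [x [y [-> h]]]. cpair_simpl. auto.
  - intros h. exists (cfst n), (csnd n). rewrite cpair_cfst_csnd. auto.
  - intros h. exists (cfst n), (csnd n). rewrite cpair_cfst_csnd. auto.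
  - intros [x [y [-> h]]]. cpair_simpl. auto.
Qed.

Section Construction.
Variable q : nat.

Definition linked (e c u v : nat) : Prop :=
  u < code_len c /\ v < code_len c /\
  (sigma_univ q (cpair e (cpair (code_nth u c) (code_nth v c))) \/
   sigma_univ q (cpair e (cpair (code_nth v c) (code_nth u c)))).

(* The point [cpair e (cpair c i)] is position [i] of the tuple coded by [c], viewed through
   the [e]-th [Sigma^0_(q+1)] relation. *)
Definition tuple_eqrel (a b : nat) : Prop :=
  cfst a = cfst b /\ cfst (csnd a) = cfst (csnd b) /\
  exists l, walk (linked (cfst a) (cfst (csnd a))) (csnd (csnd a)) l /\
            walk_end (csnd (csnd a)) l = csnd (csnd b).

Lemma linked_sym e c u v : linked e c u v -> linked e c v u.
Proof. unfold linked. tauto. Qed.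

Lemma tuple_eqrel_equivalence : equivalence_rel tuple_eqrel.
Proof.
  unfold tuple_eqrel. split; [|split].
  - intros x. repeat split; auto. exists []. simpl. auto.
  - intros x y [h1 [h2 [l [s e]]]]. rewrite <- h1, <- h2.
    destruct (walk_rev _ _ _ (linked_sym _ _) s) as [l' [s' e']]. rewrite e in s', e'. eauto.
  - intros x y z [h1 [h2 [l [s e]]]] [h3 [h4 [l' [s' e']]]].
    split; [congruence|split; [congruence|]].
    exists (l ++ l'). rewrite walk_app, walk_end_app, e, <- h1, <- h2 in *. auto.
Qed.

Lemma Sigma0_linked fe fc fu fv :
  computable fe -> computable fc -> computable fu -> computable fv ->
  Sigma0 (S q) (fun m => linked (fe m) (fc m) (fu m) (fv m)).
Proof.
  intros. unfold linked.
  apply (Sigma0_ext _ (fun m => ((fu m <? code_len (fc m)) && (fv m <? code_len (fc m))) = true /\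
    (sigma_univ q (cpair (fe m) (cpair (code_nth (fu m) (fc m)) (code_nth (fv m) (fc m)))) \/
     sigma_univ q (cpair (fe m) (cpair (code_nth (fv m) (fc m)) (code_nth (fu m) (fc m))))))).
  { intros m. rewrite andb_true_iff, !Nat.ltb_lt. tauto. }
  apply Sigma0_and; [apply Sigma0_bool; unfold computable_bool; rec_solve|].
  apply Sigma0_or; apply (Sigma0_preimage (S q) (sigma_univ q)); try apply Sigma0_sigma_univ;
    apply computable_rec_fn; rec_solve.
Qed.

(* For [m = cpair n w] with [n = cpair a b], [w] codes a walk from the position of [a] to the
   position of [b]; [cpair m k] refers to its [k]-th step. *)
Definition coded_step (u : nat) : Prop :=
  let a := cfst (cfst (cfst u)) in let w := csnd (cfst u) in let k := csnd u in
  linked (cfst a) (cfst (csnd a))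
    (if k =? 0 then csnd (csnd a) else code_nth (pred k) w) (code_nth k w).

Definition coded_end (m : nat) : nat :=
  let a := cfst (cfst m) in let w := csnd m in
  if code_len w =? 0 then csnd (csnd a) else code_nth (pred (code_len w)) w.

Definition coded_walk (m : nat) : Prop :=
  (forall k, k < code_len (csnd m) -> coded_step (cpair m k)) /\
  (coded_end m =? csnd (csnd (csnd (cfst m)))) = true.

Lemma coded_walk_seq n s :
  coded_walk (cpair n (code_seq s)) <->
  walk (linked (cfst (cfst n)) (cfst (csnd (cfst n)))) (csnd (csnd (cfst n))) s /\
  walk_end (csnd (csnd (cfst n))) s = csnd (csnd (csnd n)).
Proof.
  unfold coded_walk, coded_step, coded_end. cbv zeta.
  repeat (setoid_rewrite cfst_cpair || setoid_rewrite csnd_cpair).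
  rewrite walk_nth, walk_end_nth, code_len_seq, Nat.eqb_eq.
  setoid_rewrite code_nth_seq. tauto.
Qed.

Lemma tuple_eqrel_coded_walk n :
  tuple_eqrel (cfst n) (csnd n) <->
  ((cfst (cfst n) =? cfst (csnd n)) && (cfst (csnd (cfst n)) =? cfst (csnd (csnd n)))) = true /\
  exists w, coded_walk (cpair n w).
Proof.
  unfold tuple_eqrel. rewrite andb_true_iff, !Nat.eqb_eq. split.
  - intros [h1 [h2 [l H]]]. repeat split; auto. exists (code_seq l). apply coded_walk_seq. auto.
  - intros [[h1 h2] [w H]]. repeat split; auto. destruct (code_seq_surj w) as [l <-].
    exists l. apply coded_walk_seq. auto.
Qed.

Lemma Sigma0_eqrel_tuple_eqrel : Sigma0_eqrel (S q) tuple_eqrel.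
Proof.
  split; [apply tuple_eqrel_equivalence|]. apply Sigma0_rel_iff.
  eapply Sigma0_ext; [intros n; symmetry; apply tuple_eqrel_coded_walk|].
  apply Sigma0_and; [apply Sigma0_bool; unfold computable_bool; rec_solve|].
  apply Sigma0_exists. unfold coded_walk. apply Sigma0_and.
  - apply (Sigma0_bounded_forall _ coded_step (fun m => code_len (csnd m)));
      [|apply computable_rec_fn; rec_solve].
    unfold coded_step. apply Sigma0_linked; apply computable_rec_fn; rec_solve.
  - apply Sigma0_bool. unfold computable_bool, coded_end. rec_solve.
Qed.

Lemma walk_related (F : nat -> nat -> Prop) e s :
  equivalence_rel F -> (forall x y, F x y <-> sigma_univ q (cpair e (cpair x y))) ->
  forall l i, walk (linked e (code_seq s)) i l -> F (nth i s 0) (nth (walk_end i l) s 0).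
Proof.
  intros [Hrefl [Hsym Htrans]] HF. induction l as [|j l IH]; intros i H; simpl; [apply Hrefl|].
  destruct H as [Hij Hl]. unfold linked in Hij. destruct Hij as [_ [_ Hij]].
  apply (Htrans _ (nth j s 0)); auto.
  rewrite !code_nth_seq in Hij. destruct Hij as [h|h]; apply HF in h; auto.
Qed.

(* The code of [[cpair e (cpair d i) | i < code_len d]], built from its last entry. *)
Definition tuple_image (e d : nat) : nat :=
  nat_rect (fun _ => nat) 0
    (fun t r => code_cons (cpair e (cpair d (code_len d - S t))) r) (code_len d).

Lemma tuple_image_seq e s :
  tuple_image e (code_seq s) =
  code_seq (map (fun i => cpair e (cpair (code_seq s) i)) (seq 0 (length s))).
Proof.
  unfold tuple_image. rewrite code_len_seq.
  enough (H : forall t, t <= length s ->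
    nat_rect (fun _ => nat) 0
      (fun t r => code_cons (cpair e (cpair (code_seq s) (length s - S t))) r) t =
    code_seq (map (fun i => cpair e (cpair (code_seq s) i)) (seq (length s - t) t))).
  { rewrite H, Nat.sub_diag; auto. }
  induction t as [|t IH]; intros ht; simpl; auto. rewrite IH by lia.
  replace (length s - t) with (S (length s - S t)) by lia. auto.
Qed.

Lemma nth_map_seq0 (f : nat -> nat) n k : k < n -> nth k (map f (seq 0 n)) 0 = f k.
Proof.
  intros. rewrite nth_indep with (d' := f 0) by (rewrite length_map, length_seq; auto).
  rewrite map_nth, seq_nth; auto.
Qed.

Theorem tuple_eqrel_fin_complete F : Sigma0_eqrel (S q) F -> fin_reducible F tuple_eqrel.
Proof.
  intros [Heq HF]. apply Sigma0_rel_iff in HF.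
  destruct (sigma_univ_universal q _ HF) as [e He].
  assert (HFe : forall x y, F x y <-> sigma_univ q (cpair e (cpair x y))).
  { intros x y. rewrite <- He. cpair_simpl. tauto. }
  set (image s := map (fun i => cpair e (cpair (code_seq s) i)) (seq 0 (length s))).
  exists image. split.
  - assert (Himg : rec_fn 1 (fun xs => tuple_image e (nth 0 xs 0)))
      by (unfold tuple_image, code_cons; rec_solve).
    destruct Himg as [c Hc]. exists c. intros s. unfold image.
    rewrite <- tuple_image_seq. apply (Hc [code_seq s]). auto.
  - intros s hs. split; [unfold image; rewrite length_map, length_seq; auto|].
    intros i j [hij hj]. unfold image. rewrite !nth_map_seq0 by lia.
    unfold tuple_eqrel. cpair_simpl. split.
    + intros h. split; [auto|split; [auto|]]. exists [j]. simpl.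
      split; [split; [|exact I]|reflexivity].
      unfold linked. rewrite code_len_seq, !code_nth_seq. repeat split; try lia.
      left. apply HFe. auto.
    + intros [_ [_ [l [hl hend]]]]. rewrite <- hend. apply (walk_related F e s Heq HFe l i hl).
Qed.

Definition K (x : nat) : Prop := sigma_univ q (cpair x x).

Lemma K_undecidable : ~ decidable_set K.
Proof.
  intros HK. destruct (decidable_set_to_bool _ HK) as [b [Hb HKb]].
  assert (Hc : Sigma0 (S q) (fun x => negb (b x) = true)).
  { apply Sigma0_bool. unfold computable_bool in *. rec_solve. }
  destruct (sigma_univ_universal q _ Hc) as [e He]. specialize (He e). specialize (HKb e).
  unfold K in HKb. destruct (b e); simpl in He; intuition discriminate.
Qed.

Definition K_collapsed (x y : nat) : Prop := x = y \/ (K x /\ K y).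

Lemma Sigma0_eqrel_K_collapsed : Sigma0_eqrel (S q) K_collapsed.
Proof.
  split.
  - unfold K_collapsed. split; [|split]; [auto|intros x y [h|h]; [left|right]; intuition|].
    intros x y z [h|h] [h'|h']; subst; auto; right; intuition.
  - apply Sigma0_rel_iff.
    apply (Sigma0_ext _ (fun n => (cfst n =? csnd n) = true \/
      (sigma_univ q (cpair (cfst n) (cfst n)) /\ sigma_univ q (cpair (csnd n) (csnd n))))).
    { intros n. unfold K_collapsed, K. rewrite Nat.eqb_eq. tauto. }
    apply Sigma0_or; [apply Sigma0_bool; unfold computable_bool; rec_solve|].
    apply Sigma0_and; apply (Sigma0_preimage (S q) (sigma_univ q)); try apply Sigma0_sigma_univ;
      apply computable_rec_fn; rec_solve.
Qed.

Lemma walk_linked_end_lt e c x y l : walk (linked e c) x (y :: l) -> walk_end y l < code_len c.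
Proof.
  revert x y; induction l as [|z l IH]; intros x y [[_ [hy _]] hl]; simpl; auto.
  apply (IH y z hl).
Qed.

Lemma tuple_eqrel_class a b :
  tuple_eqrel a b ->
  b = a \/ exists j, j < code_len (cfst (csnd a)) /\ b = cpair (cfst a) (cpair (cfst (csnd a)) j).
Proof.
  intros [h1 [h2 [l [hl e]]]].
  assert (Hb : b = cpair (cfst a) (cpair (cfst (csnd a)) (csnd (csnd b))))
    by (rewrite h1, h2, !cpair_cfst_csnd; auto).
  destruct l as [|y l].
  - left. rewrite Hb. simpl in e. rewrite <- e, !cpair_cfst_csnd. auto.
  - right. exists (csnd (csnd b)). split; auto.
    rewrite <- e. apply (walk_linked_end_lt _ _ _ _ _ hl).
Qed.

Lemma rec_pred_in_list k F L : rec_fn k F -> rec_pred k (fun xs => existsb (fun y => F xs =? y) L).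
Proof.
  intros HF. induction L as [|y L IH]; simpl; [apply rec_pred_const|].
  apply rec_pred_orb; auto. apply rec_pred_eqb; auto. apply rec_fn_const.
Qed.

(* A reduction [g] would decide [K]: besides a fixed [x0] in [K], it consists of the [x]
   with [g x] in the finite class of [g x0]. *)
Theorem K_collapsed_not_creducible : ~ creducible K_collapsed tuple_eqrel.
Proof.
  intros [g [Hg Hred]]. apply K_undecidable.
  destruct (classic (exists x0, K x0)) as [[x0 Hx0]|Hno].
  2:{ destruct (rec_fn_const 1 1) as [c Hc]. exists c. intros x.
      split; intros h; [exfalso; eauto|apply (Hc [x]); auto]. }
  set (a := g x0).
  set (block := a :: map (fun j => cpair (cfst a) (cpair (cfst (csnd a)) j))
                          (seq 0 (code_len (cfst (csnd a))))).
  set (cls := filter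
    (fun b => if excluded_middle_informative (tuple_eqrel a b) then true else false) block).
  apply (Sigma0_ext 0 (fun x => ((x =? x0) || existsb (fun y => g x =? y) cls) = true)).
  2:{ apply Sigma0_bool. unfold computable_bool. apply computable_rec_fn in Hg.
      apply rec_pred_orb; [rec_solve|apply (rec_pred_in_list 1 (fun xs => g (nth 0 xs 0))); auto]. }
  intros x. rewrite orb_true_iff, Nat.eqb_eq, existsb_exists. split.
  - intros [->|[y [hy e]]]; auto. apply Nat.eqb_eq in e. subst y.
    apply filter_In in hy. destruct hy as [_ hy].
    destruct (excluded_middle_informative _) as [hE|]; [|discriminate].
    apply Hred in hE. destruct hE as [->|[_ h]]; auto.
  - intros hx. destruct (Nat.eq_dec x x0) as [|hne]; auto. right. exists (g x).
    split; [|apply Nat.eqb_refl].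
    assert (hE : tuple_eqrel a (g x)) by (apply Hred; right; auto).
    apply filter_In. split.
    + destruct (tuple_eqrel_class _ _ hE) as [h|[j [hj h]]]; [left; auto|].
      right. rewrite h. apply in_map_iff. exists j. split; auto. apply in_seq. lia.
    + destruct (excluded_middle_informative _); auto.
Qed.

End Construction.

Theorem theorem4p12 : forall p : nat, 0 < p ->
  exists E : nat -> nat -> Prop,
    Sigma0_eqrel p E /\
    (forall F, Sigma0_eqrel p F -> fin_reducible F E) /\
    (exists F, Sigma0_eqrel p F /\ ~ creducible F E).
Proof.
  intros [|q] hp; [lia|]. exists (tuple_eqrel q). split; [apply Sigma0_eqrel_tuple_eqrel|].
  split; [apply tuple_eqrel_fin_complete|].
  exists (K_collapsed q). split; [apply Sigma0_eqrel_K_collapsed|apply K_collapsed_not_creducible].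
Qed.
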